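(* There is a constant $C$ such that every finite graph $G$ satisfies $L(G)\le T(D(G)+\log^*D(G)+C)$.
   Context: The tower function is $T(0)=1$, $T(i)=2^{T(i-1)}$; $\log^* n=\min\{i: T(i)\ge n\}$. Graphs are simple undirected graphs viewed as structures for the first-order language with adjacency symbol $\sim$ and equality. A sentence defines a finite graph $G$ if it is true on $G$ and false on every graph (of any cardinality) not isomorphic to $G$. $D(G)$ is the minimum quantifier rank (maximum number of nested quantifiers) of a sentence defining $G$, and $L(G)$ is the minimum length of a sentence defining $G$, where length is the number of symbols with each variable and each relation symbol counted as a single symbol. *)

From mathcomp Require Import all_boot.
Set Implicit Arguments. Unset Strict Implicit. Unset Printing Implicit Defensive.

Fixpoint tower (i : nat) : nat :=
  match i with 0 => 1 | i'.+1 => 2 ^ tower i' end.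

(* log* n = min { i : T(i) >= n }; since T(i) >= i, the search over 0..n suffices. *)
Definition logstar (n : nat) : nat :=
  find (fun i => n <= tower i) (iota 0 n.+1).

Inductive form : Type :=
| FAdj : nat -> nat -> form
| FEq  : nat -> nat -> form
| FNot : form -> form
| FAnd : form -> form -> form
| FOr  : form -> form -> form
| FImp : form -> form -> form
| FIff : form -> form -> form
| FEx  : nat -> form -> form
| FAll : nat -> form -> form.

Fixpoint qrank (f : form) : nat :=
  match f with
  | FAdj _ _ | FEq _ _ => 0
  | FNot g => qrank g
  | FAnd g h | FOr g h | FImp g h | FIff g h => maxn (qrank g) (qrank h)
  | FEx _ g | FAll _ g => (qrank g).+1
  end.

(* Length: number of symbols, each variable and relation symbol counting as one.
   Atoms "x ~ y", "x = y" have 3 symbols; "~phi" adds 1; binary connectives are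
   written with parentheses "(phi * psi)" adding 3; "Qx phi" adds 2. *)
Fixpoint flen (f : form) : nat :=
  match f with
  | FAdj _ _ | FEq _ _ => 3
  | FNot g => (flen g).+1
  | FAnd g h | FOr g h | FImp g h | FIff g h => flen g + flen h + 3
  | FEx _ g | FAll _ g => (flen g).+2
  end.

Fixpoint free (f : form) (v : nat) : bool :=
  match f with
  | FAdj x y | FEq x y => (x == v) || (y == v)
  | FNot g => free g v
  | FAnd g h | FOr g h | FImp g h | FIff g h => free g v || free h v
  | FEx x g | FAll x g => (x != v) && free g v
  end.

Definition sentence (f : form) : Prop := forall v, free f v = false.

Definition upd (V : Type) (env : nat -> V) (x : nat) (a : V) : nat -> V :=
  fun y => if y == x then a else env y.

Fixpoint sat (V : Type) (R : V -> V -> Prop) (env : nat -> V) (f : form) : Prop :=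
  match f with
  | FAdj x y => R (env x) (env y)
  | FEq x y => env x = env y
  | FNot g => ~ sat R env g
  | FAnd g h => sat R env g /\ sat R env h
  | FOr g h => sat R env g \/ sat R env h
  | FImp g h => sat R env g -> sat R env h
  | FIff g h => sat R env g <-> sat R env h
  | FEx x g => exists a : V, sat R (upd env x a) g
  | FAll x g => forall a : V, sat R (upd env x a) g
  end.

Definition holds (V : Type) (R : V -> V -> Prop) (f : form) : Prop :=
  forall env : nat -> V, sat R env f.

Definition is_graph (V : Type) (R : V -> V -> Prop) : Prop :=
  inhabited V /\ (forall x y, R x y -> R y x) /\ (forall x, ~ R x x).

Definition iso (T : finType) (e : rel T) (V : Type) (R : V -> V -> Prop) : Prop :=
  exists (f : T -> V) (g : V -> T),
    (forall x, g (f x) = x) /\ (forall y, f (g y) = y) /\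
    (forall x y, R (f x) (f y) <-> e x y).

Definition defines (T : finType) (e : rel T) (phi : form) : Prop :=
  sentence phi /\ holds (fun x y => e x y) phi /\
  (forall (V : Type) (R : V -> V -> Prop),
      is_graph R -> ~ iso e R -> ~ holds R phi).

Definition is_D (T : finType) (e : rel T) (d : nat) : Prop :=
  (exists phi, defines e phi /\ qrank phi = d) /\
  (forall phi, defines e phi -> d <= qrank phi).

Definition is_L (T : finType) (e : rel T) (l : nat) : Prop :=
  (exists phi, defines e phi /\ flen phi = l) /\
  (forall phi, defines e phi -> l <= flen phi).

From HB Require Import structures.
From mathcomp Require Import all_boot zify.
From Stdlib Require Import Classical ClassicalEpsilon Wf_nat.
Set Implicit Arguments. Unset Strict Implicit. Unset Printing Implicit Defensive.

(* The rank-k Hintikka formula of a tuple s of G asserts, for each one-point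
   extension of s, the rank-(k-1) Hintikka formula of that extension (under an
   existential), and that every extension satisfies one of them (under a
   universal).  A tuple r of any structure H satisfies it exactly when Duplicator
   wins the k-round Ehrenfeucht-Fraisse game on (G, s) and (H, r); such tuples
   agree with s on all formulas of rank <= k.  Hence if some sentence of rank D
   defines G, so does the rank-D Hintikka sentence, and L(G) is at most its length.
   A rank-k formula of an m-tuple is determined by a subset of the rank-(k-1)
   formulas of (m+1)-tuples, so their number and length are bounded by the k-fold
   iterated exponential of 2^(2(m+k)^2+4); for m = 0, k = D this is at most
   T(D + log* D + 5). *)

Scheme Equality for form.

Lemma form_beqP : Equality.axiom form_beq.
Proof.
move=> f g; apply: (iffP idP); first exact: internal_form_dec_bl.
exact: internal_form_dec_lb.
Qed.

HB.instance Definition _ := hasDecEq.Build form form_beqP.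

Lemma sumn_fresh (W : seq nat) : (sumn W).+1 \notin W.
Proof.
apply/negP; suff: forall v, v \in W -> v <= sumn W by move=> /[apply]; lia.
by elim: W => //= a W IH v; rewrite in_cons => /orP[/eqP->|/IH]; lia.
Qed.

Section BackAndForth.
Variables (A B : Type) (RA : A -> A -> Prop) (RB : B -> B -> Prop).

Definition partial_iso (W : seq nat) (s : nat -> A) (r : nat -> B) : Prop :=
  forall i j, i \in W -> j \in W ->
    (RA (s i) (s j) <-> RB (r i) (r j)) /\ (s i = s j <-> r i = r j).

Fixpoint back_forth (k : nat) (W : seq nat) (s : nat -> A) (r : nat -> B) : Prop :=
  if k is k'.+1 then
    partial_iso W s r /\ forall x, x \notin W ->
      (forall a, exists b, back_forth k' (x :: W) (upd s x a) (upd r x b)) /\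
      (forall b, exists a, back_forth k' (x :: W) (upd s x a) (upd r x b))
  else partial_iso W s r.

Lemma back_forth_partial_iso k W s r : back_forth k W s r -> partial_iso W s r.
Proof. by case: k => [|k] // []. Qed.

Lemma partial_iso_rename W s r W' s' r' (p : nat -> nat) :
  (forall v, v \in W' -> [/\ p v \in W, s' v = s (p v) & r' v = r (p v)]) ->
  partial_iso W s r -> partial_iso W' s' r'.
Proof.
move=> hp H i j /hp[pi -> ->] /hp[pj -> ->]; exact: H.
Qed.

Lemma back_forth_rename k W s r W' s' r' (p : nat -> nat) :
  (forall v, v \in W' -> [/\ p v \in W, s' v = s (p v) & r' v = r (p v)]) ->
  back_forth k W s r -> back_forth k W' s' r'.
Proof.
elim: k W s r W' s' r' p => [|k IH] W s r W' s' r' p hp.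
  exact: partial_iso_rename hp.
move=> [H0 H]; split; first exact: partial_iso_rename hp H0.
move=> x _; set z := (sumn W).+1; have [forth back] := H z (sumn_fresh W).
pose p' v := if v == x then z else p v.
have hp' a b v : v \in x :: W' ->
    [/\ p' v \in z :: W, upd s' x a v = upd s z a (p' v)
       & upd r' x b v = upd r z b (p' v)].
  rewrite in_cons /p' /upd; case: eqP => [->|_] /=; first by rewrite !eqxx in_cons eqxx.
  move=> /hp[pv -> ->]; have /negbTE-> : p v != z.
    by apply: contraNneq (sumn_fresh W); rewrite -/z => <-.
  by rewrite in_cons pv orbT.
split=> [a|b].
- by have [b hb] := forth a; exists b; exact: IH (hp' a b) hb.
- by have [a ha] := back b; exists a; exact: IH (hp' a b) ha.
Qed.

Lemma back_forth_fresh k W m x s r a b : m \notin W -> x \notin W ->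
  back_forth k (m :: W) (upd s m a) (upd r m b) ->
  back_forth k (x :: W) (upd s x a) (upd r x b).
Proof.
move=> mW xW; apply: (back_forth_rename (p := fun v => if v == x then m else v)) => v.
rewrite in_cons /upd; case: eqP => [->|_] /=; first by rewrite !eqxx mem_head.
move=> vW; have /negbTE-> : v != m by apply: contraNneq mW => <-.
by rewrite in_cons vW orbT.
Qed.

Lemma back_forth_bind k W x f s r :
  (forall v, (x != v) && free f v -> v \in W) -> back_forth k.+1 W s r ->
  exists W', [/\ forall v, free f v -> v \in W',
    forall a, exists b, back_forth k W' (upd s x a) (upd r x b) &
    forall b, exists a, back_forth k W' (upd s x a) (upd r x b)].
Proof.
move=> hW hB; set W' := [seq v <- W | v != x].
have hB' : back_forth k.+1 W' s r.
  by apply: (back_forth_rename (p := id)) hB => v; rewrite mem_filter => /andP[_ ->].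
have xW' : x \notin W' by rewrite mem_filter eqxx.
have [forth back] := hB'.2 x xW'.
exists (x :: W'); split=> // v fv; rewrite in_cons mem_filter.
by case: (eqVneq v x) => //= nvx; apply: hW; rewrite eq_sym nvx.
Qed.

Lemma sat_back_forth phi k W s r :
  qrank phi <= k -> (forall v, free phi v -> v \in W) -> back_forth k W s r ->
  (sat RA s phi <-> sat RB r phi).
Proof.
elim: phi k W s r => [a b|a b|f IH|f IHf g IHg|f IHf g IHg|f IHf g IHg|f IHf g IHg
  |x f IH|x f IH] k W s r /=.
- move=> _ hW /back_forth_partial_iso/(_ a b) [|| //]; apply: hW; by rewrite eqxx ?orbT.
- move=> _ hW /back_forth_partial_iso/(_ a b) [|| //]; apply: hW; by rewrite eqxx ?orbT.
- by move=> hk hW hB; have := IH _ _ _ _ hk hW hB; tauto.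
1-4: rewrite geq_max => /andP[hf hg] hW hB;
  (have hWf v : free f v -> v \in W by move=> hv; apply: hW; rewrite hv);
  (have hWg v : free g v -> v \in W by move=> hv; apply: hW; rewrite hv orbT);
  have := IHf _ _ _ _ hf hWf hB; have := IHg _ _ _ _ hg hWg hB; tauto.
- case: k => [//|k] hk hW /(back_forth_bind hW) [W' [hW' forth back]].
  split=> [[a ha]|[b hb]].
  + by have [b hb] := forth a; exists b; apply/(IH _ _ _ _ hk hW' hb).
  + by have [a ha] := back b; exists a; apply/(IH _ _ _ _ hk hW' ha).
- case: k => [//|k] hk hW /(back_forth_bind hW) [W' [hW' forth back]].
  split=> [h b|h a].
  + by have [a ha] := back b; apply/(IH _ _ _ _ hk hW' ha).
  + by have [b hb] := forth a; apply/(IH _ _ _ _ hk hW' hb).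
Qed.

End BackAndForth.

Lemma back_forth_refl (A : Type) (R : A -> A -> Prop) k W s : back_forth R R k W s s.
Proof.
elim: k W s => [|k IH] W s /=; first by move=> i j _ _; split.
split; first by move=> i j _ _; split.
by move=> x _; split=> a; exists a; apply: IH.
Qed.

Definition form_true := FAll 0 (FEq 0 0).
Definition big_and (l : seq form) : form := foldr FAnd form_true l.
Definition big_or (l : seq form) : form := foldr FOr (FNot form_true) l.

Lemma sat_big_and (V : Type) (R : V -> V -> Prop) r l :
  sat R r (big_and l) <-> forall f, f \in l -> sat R r f.
Proof.
elim: l => [|a l IH] /=; first by split=> // _ b.
rewrite IH; split=> [[ha hl] f|h]; first by rewrite in_cons => /orP[/eqP->|/hl].
by split=> [|f hf]; apply: h; rewrite in_cons ?eqxx ?hf ?orbT.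
Qed.

Lemma sat_big_or (V : Type) (R : V -> V -> Prop) r l :
  sat R r (big_or l) <-> exists2 f, f \in l & sat R r f.
Proof.
elim: l => [|a l IH] /=; first by split=> [h|[]//]; case: h => b.
rewrite IH; split=> [[ha|[f hf hs]]|[f]]; first by exists a; rewrite ?mem_head.
  by exists f; rewrite ?in_cons ?hf ?orbT.
by rewrite in_cons => /orP[/eqP->|hf]; [left|right; exists f].
Qed.

Lemma free_big_and l v : free (big_and l) v -> exists2 f, f \in l & free f v.
Proof.
elim: l => [|a l IH] /=; first by case: eqP.
case/orP=> [|/IH[f hf]]; first by exists a; rewrite ?mem_head.
by exists f; rewrite ?in_cons ?hf ?orbT.
Qed.

Lemma free_big_or l v : free (big_or l) v -> exists2 f, f \in l & free f v.
Proof.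
elim: l => [|a l IH] /=; first by case: eqP.
case/orP=> [|/IH[f hf]]; first by exists a; rewrite ?mem_head.
by exists f; rewrite ?in_cons ?hf ?orbT.
Qed.

Lemma flen_big_and l Y : (forall f, f \in l -> flen f <= Y) ->
  flen (big_and l) <= size l * (Y + 3) + 5.
Proof.
elim: l => [|a l IH] h //; have := h a (mem_head _ _).
have := IH (fun f hf => h f (@mem_behead _ (a :: l) f hf)); rewrite /big_and /=; lia.
Qed.

Lemma flen_big_or l Y : (forall f, f \in l -> flen f <= Y) ->
  flen (big_or l) <= size l * (Y + 3) + 6.
Proof.
elim: l => [|a l IH] h //; have := h a (mem_head _ _).
have := IH (fun f hf => h f (@mem_behead _ (a :: l) f hf)); rewrite /big_or /=; lia.
Qed.

Section Hintikka.
Variables (T : finType) (e : rel T) (x0 : T).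

Definition adj (x y : T) : Prop := e x y.

Definition tuples (m : nat) : seq (seq T) := map val (enum {: m.-tuple T}).

Lemma mem_tuples m t : (t \in tuples m) = (size t == m).
Proof.
apply/mapP/idP => [[u _ ->]|ht]; first by rewrite size_tuple.
by exists (Tuple ht); rewrite ?mem_enum.
Qed.

Definition env_of (s : seq T) (i : nat) : T := nth x0 s i.

Definition atoms (m : nat) : seq form :=
  [seq FAdj i j | i <- iota 0 m, j <- iota 0 m] ++
  [seq FEq i j | i <- iota 0 m, j <- iota 0 m].

Lemma size_atoms m : size (atoms m) = 2 * (m * m).
Proof. by rewrite size_cat !size_allpairs size_iota; lia. Qed.

Lemma mem_atoms m a : a \in atoms m ->
  exists i j, [/\ i < m, j < m & a = FAdj i j \/ a = FEq i j].
Proof.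
rewrite mem_cat => /orP[] /allpairsP [[i j] /= [hi hj ->]];
  by exists i, j; rewrite !mem_iota /= in hi hj; split => //; tauto.
Qed.

Lemma adj_atoms m i j : i < m -> j < m -> FAdj i j \in atoms m.
Proof. by move=> hi hj; rewrite mem_cat allpairs_f ?mem_iota. Qed.

Lemma eq_atoms m i j : i < m -> j < m -> FEq i j \in atoms m.
Proof. by move=> hi hj; rewrite mem_cat orbC allpairs_f ?mem_iota. Qed.

Definition atom_val (s : seq T) (a : form) : bool :=
  match a with
  | FAdj i j => e (env_of s i) (env_of s j)
  | FEq i j => env_of s i == env_of s j
  | _ => true
  end.

Definition literal (a : form) (b : bool) : form := if b then a else FNot a.

Definition atomic_diagram (m : nat) (bs : seq bool) : form :=
  big_and [seq literal p.1 p.2 | p <- zip (atoms m) bs].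

Definition hintikka_step (m : nat) (L : seq form) : form :=
  FAnd (big_and [seq FEx m f | f <- L]) (FAll m (big_or L)).

(* Selecting the extensions of [s] from the list of all Hintikka formulas of
   [(size s).+1]-tuples, rather than mapping over the new element, makes
   [hintikka k.+1 s] a function of a bit mask over that list; this is what
   bounds the number of distinct Hintikka formulas. *)
Fixpoint hintikka (k : nat) (s : seq T) : form :=
  if k is k'.+1 then
    hintikka_step (size s)
      [seq f <- undup [seq hintikka k' t | t <- tuples (size s).+1] |
         [exists y, hintikka k' (rcons s y) == f]]
  else atomic_diagram (size s) [seq atom_val s a | a <- atoms (size s)].

Definition hintikkas (k m : nat) : seq form := undup [seq hintikka k t | t <- tuples m].

Definition hintikka_exts (k : nat) (s : seq T) : seq form :=
  [seq f <- hintikkas k (size s).+1 | [exists y, hintikka k (rcons s y) == f]].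

Lemma hintikkaS k s : hintikka k.+1 s = hintikka_step (size s) (hintikka_exts k s).
Proof. by []. Qed.

Lemma hintikka0 s :
  hintikka 0 s = big_and [seq literal a (atom_val s a) | a <- atoms (size s)].
Proof. by rewrite /= /atomic_diagram; elim: (atoms _) => //= a l ->. Qed.

Lemma mem_hintikka_exts k s f :
  f \in hintikka_exts k s <-> exists y, hintikka k (rcons s y) = f.
Proof.
rewrite mem_filter mem_undup; split=> [/andP[/existsP[y /eqP]]|[y <-]]; first by exists y.
by rewrite map_f ?mem_tuples ?size_rcons // andbT; apply/existsP; exists y.
Qed.

Lemma free_hintikka k s v : free (hintikka k s) v -> v < size s.
Proof.
elim: k s => [|k IH] s.
  rewrite hintikka0 => /free_big_and [f /mapP [a /mem_atoms [i [j [hi hj ha]]] ->]].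
  by case: ha => ->; rewrite /literal; case: atom_val => /= /orP[] /eqP <-.
have ext_lt f : f \in hintikka_exts k s -> free f v -> v <= size s.
  by case/mem_hintikka_exts => y <- /IH; rewrite size_rcons.
rewrite hintikkaS /= => /orP[/free_big_and [_ /mapP [f hf ->]]|] /andP[nv].
  by move/(ext_lt _ hf); rewrite leq_eqVlt eq_sym (negbTE nv).
by case/free_big_or=> f /ext_lt /[apply]; rewrite leq_eqVlt eq_sym (negbTE nv).
Qed.

Section Semantics.
Variables (B : Type) (RB : B -> B -> Prop).

Lemma sat_hintikka0 s r :
  sat RB r (hintikka 0 s) <-> partial_iso adj RB (iota 0 (size s)) (env_of s) r.
Proof.
rewrite hintikka0 sat_big_and; split.
  move=> h i j; rewrite !mem_iota /= => hi hj; split.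
    have := h _ (map_f (fun a => literal a (atom_val s a)) (adj_atoms hi hj)).
    by rewrite /literal /= /adj; case: e => /= H; split=> // /H.
  have := h _ (map_f (fun a => literal a (atom_val s a)) (eq_atoms hi hj)).
  by rewrite /literal /=; case: eqP => /= E H; split=> // /E.
move=> h _ /mapP [a /mem_atoms [i [j [hi hj ha]]] ->].
have := h i j; rewrite !mem_iota /= => /(_ hi hj) [hA hE].
case: ha => -> /=; rewrite /literal /=.
  by move: hA; rewrite /adj; case: e => /= -[H1 H2]; [apply: H1 | move/H2].
by move: hE; case: eqP => /= E [H1 H2]; [apply: H1 | move/H2].
Qed.

Lemma back_forth_rcons k s y r b :
  back_forth adj RB k (iota 0 (size s).+1) (env_of (rcons s y)) (upd r (size s) b) <->
  back_forth adj RB k (size s :: iota 0 (size s))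
    (upd (env_of s) (size s) y) (upd r (size s) b).
Proof.
have mem_iotaS v : (v \in iota 0 (size s).+1) = (v \in size s :: iota 0 (size s)).
  by rewrite !mem_iota in_cons mem_iota /= ltnS leq_eqVlt.
have env_rcons v : env_of (rcons s y) v = upd (env_of s) (size s) y v.
  rewrite /env_of /upd nth_rcons; case: (ltngtP v (size s)) => // hv.
  by rewrite nth_default // ltnW.
by split; apply: (back_forth_rename (p := id)) => v; rewrite env_rcons mem_iotaS.
Qed.

Lemma sat_hintikka k s r :
  sat RB r (hintikka k s) <-> back_forth adj RB k (iota 0 (size s)) (env_of s) r.
Proof.
elim: k s r => [|k IH] s r; first exact: sat_hintikka0.
set m := size s; have mW : m \notin iota 0 m by rewrite mem_iota /= ltnn.
have sat_ext y b : sat RB (upd r m b) (hintikka k (rcons s y)) <->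
    back_forth adj RB k (m :: iota 0 m) (upd (env_of s) m y) (upd r m b).
  by rewrite IH size_rcons back_forth_rcons.
rewrite hintikkaS /hintikka_step [sat _ _ _]/= sat_big_and; split.
- move=> [hex hall].
  have forth y :
      exists b, back_forth adj RB k (m :: iota 0 m) (upd (env_of s) m y) (upd r m b).
    have [|b] := hex (FEx m (hintikka k (rcons s y))); last by exists b; apply/sat_ext.
    by apply: map_f; apply/mem_hintikka_exts; exists y.
  have back b :
      exists y, back_forth adj RB k (m :: iota 0 m) (upd (env_of s) m y) (upd r m b).
    have /sat_big_or [_ /mem_hintikka_exts [y <-] /sat_ext] := hall b; by exists y.
  split.
    have [y /back_forth_partial_iso] := back (r 0).
    apply: (partial_iso_rename (p := id)) => v hv.
    have /negbTE nv : v != m by apply: contraTneq hv => ->.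
    by rewrite /upd nv in_cons hv orbT.
  move=> x xW; split=> [y|b].
  + by have [b hb] := forth y; exists b; apply: back_forth_fresh hb.
  + by have [y hy] := back b; exists y; apply: back_forth_fresh hy.
- move=> [_ /(_ m mW) [forth back]]; split.
    move=> _ /mapP [_ /mem_hintikka_exts [y <-] ->].
    by have [b hb] := forth y; exists b; apply/sat_ext.
  move=> b; have [y hy] := back b; apply/sat_big_or; exists (hintikka k (rcons s y)).
    by apply/mem_hintikka_exts; exists y.
  exact/sat_ext.
Qed.

End Semantics.

Lemma back_forth_prefix (V : Type) (R : V -> V -> Prop) l j k s r :
  j <= size l -> back_forth adj R (j + k) [::] s r ->
  exists r', back_forth adj R k (iota 0 j) (env_of l) r'.
Proof.
elim: j k => [|j IH] k hj hB; first by exists r; apply: (back_forth_rename (p := id)) hB.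
rewrite addSnnS in hB; have [r' [_ /(_ j) []]] := IH k.+1 (ltnW hj) hB.
  by rewrite mem_iota /= ltnn.
move=> /(_ (nth x0 l j)) [b hb] _; exists (upd r' j b).
apply: (back_forth_rename (p := id)) hb => v.
rewrite !mem_iota in_cons mem_iota /= /upd /env_of.
by case: eqP => [->|ne] hv; split=> //; lia.
Qed.

Lemma back_forth_card_iso (V : Type) (R : V -> V -> Prop) s r :
  back_forth adj R #|T|.+1 [::] s r -> iso e R.
Proof.
move=> hB; set l := enum T.
have [r' [H0 /(_ #|T|) []]] : exists r', back_forth adj R 1 (iota 0 #|T|) (env_of l) r'.
  by rewrite -addn1 in hB; apply: (back_forth_prefix _ hB); rewrite -cardE.
  by rewrite mem_iota /= ltnn.
move=> _ back.
have idx t : index t l \in iota 0 #|T| by rewrite mem_iota /= cardE index_mem mem_enum.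
have envK t : env_of l (index t l) = t by rewrite /env_of nth_index ?mem_enum.
pose f t := r' (index t l).
have f_surj b : exists t, f t = b.
  have [t /(_ #|T| (index t l))] := back b; rewrite mem_head in_cons idx orbT.
  move=> /(_ isT isT) [_]; rewrite /upd eqxx; move: (idx t); rewrite mem_iota /=.
  by case: eqP => [->|_ _]; rewrite ?ltnn // envK => /iffLR /(_ erefl) ->; exists t.
have f_inj t1 t2 : f t1 = f t2 -> t1 = t2.
  by have [_ /iffRL] := H0 _ _ (idx t1) (idx t2); rewrite !envK.
pose g b := proj1_sig (constructive_indefinite_description _ (f_surj b)).
have fK b : f (g b) = b by rewrite /g; case: constructive_indefinite_description.
exists f, g; split=> [t|]; first exact/f_inj/fK.
split=> [|t u]; first exact: fK.
by have [h _] := H0 _ _ (idx t) (idx u); rewrite !envK in h; exact: iff_sym h.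
Qed.

Lemma sentence_hintikka k : sentence (hintikka k [::]).
Proof. by move=> v; apply/negP => /free_hintikka. Qed.

Lemma holds_hintikka k : holds adj (hintikka k [::]).
Proof.
move=> r; apply/sat_hintikka.
exact: (back_forth_rename (p := id)) (back_forth_refl adj k [::] r).
Qed.

Lemma defines_hintikka phi k :
  defines e phi -> qrank phi <= k -> defines e (hintikka k [::]).
Proof.
move=> [sphi [hphi niso_phi]] hk.
split; [exact: sentence_hintikka | split; first exact: holds_hintikka].
move=> V R gR niso hth; apply: (niso_phi V R gR niso) => r.
have /sat_hintikka hB := hth r.
have free_nil v : free phi v -> v \in [::] by rewrite sphi.
exact/(sat_back_forth hk free_nil hB)/hphi.
Qed.

Lemma defines_hintikka_card : defines e (hintikka #|T|.+1 [::]).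
Proof.
split; [exact: sentence_hintikka | split; first exact: holds_hintikka].
move=> V R [[v] _] niso hth; apply: niso.
by have /sat_hintikka := hth (fun _ => v); apply: back_forth_card_iso.
Qed.

End Hintikka.

Lemma size_undup_bitcoded (X : eqType) (l : seq X) (F : seq bool -> X) N :
  (forall x, x \in l -> exists2 bs, size bs = N & x = F bs) -> size (undup l) <= 2 ^ N.
Proof.
move=> hF; rewrite -[2]card_bool -card_tuple cardE -(size_map (F \o val)).
apply: uniq_leq_size (undup_uniq l) _ => x; rewrite mem_undup => /hF [bs /eqP hbs ->].
by apply/mapP; exists (Tuple hbs); rewrite ?mem_enum.
Qed.

Lemma affine_le_exp2 x : 14 * x + 5 <= 2 ^ (2 * x + 4).
Proof.
have h1 := ltn_expl x (isT : 1 < 2).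
have h2 : 2 ^ x <= 2 ^ (2 * x) by apply: leq_pexp2l => //; lia.
rewrite expnD; lia.
Qed.

Lemma quad_le_exp2 Y : 16 <= Y -> Y * (2 * Y + 8) + 16 <= 2 ^ Y.
Proof.
move=> /subnK <-; elim: (Y - 16) => [//|j IH].
rewrite addSn expnS; move: IH; set p := 2 ^ (j + 16); nia.
Qed.

Lemma sq_le_exp2 t : 2 * (t * t) + 4 <= 2 ^ (2 * t + 3).
Proof.
elim: t => [//|t IH]; rewrite (_ : 2 * t.+1 + 3 = (2 * t + 3).+2) ?expnS; last by lia.
move: IH; set p := 2 ^ (2 * t + 3); nia.
Qed.

Lemma double_le_exp2 t : 2 * t + 3 <= 2 ^ (t + 2).
Proof. elim: t => [//|t IH]; rewrite addSn expnS; lia. Qed.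

(* Each quantifier round costs one exponential and one more free variable. *)
Definition hintikka_bound (k m : nat) : nat :=
  iter k (fun x => 2 ^ x) (2 ^ (2 * ((m + k) * (m + k)) + 4)).

Lemma hintikka_boundS k m : hintikka_bound k.+1 m = 2 ^ hintikka_bound k m.+1.
Proof. by rewrite /hintikka_bound iterS -[m + k.+1]addSnnS. Qed.

Lemma hintikka_bound_ge16 k m : 16 <= hintikka_bound k m.
Proof.
elim: k m => [|k IH] m; first by rewrite /hintikka_bound /= (@leq_pexp2l 2 4); lia.
by rewrite hintikka_boundS; apply: leq_trans (IH m.+1) (ltnW (ltn_expl _ _)).
Qed.

Section HintikkaBounds.
Variables (T : finType) (e : rel T) (x0 : T).

Lemma size_hintikkas0 m : size (hintikkas e x0 0 m) <= 2 ^ (2 * (m * m)).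
Proof.
rewrite -(size_atoms m); apply: (size_undup_bitcoded (F := atomic_diagram m)).
move=> f /mapP [t]; rewrite mem_tuples => /eqP <- ->.
by exists [seq atom_val e x0 t a | a <- atoms (size t)]; rewrite ?size_map.
Qed.

Lemma size_hintikkasS k m :
  size (hintikkas e x0 k.+1 m) <= 2 ^ size (hintikkas e x0 k m.+1).
Proof.
apply: (size_undup_bitcoded
  (F := fun bs => hintikka_step m (mask bs (hintikkas e x0 k m.+1)))).
move=> f /mapP [t]; rewrite mem_tuples => /eqP <- ->.
eexists; last by rewrite hintikkaS /hintikka_exts filter_mask.
by rewrite size_map.
Qed.

Lemma flen_hintikka0 s : flen (hintikka e x0 0 s) <= 14 * (size s * size s) + 5.
Proof.
rewrite hintikka0 (_ : 14 * _ = size (atoms (size s)) * (4 + 3)); last first.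
  by rewrite size_atoms; lia.
rewrite -(size_map (fun a => literal a (atom_val e x0 s a))).
apply: flen_big_and => _ /mapP [a /mem_atoms [i [j [_ _ ha]]] ->].
by case: ha => ->; rewrite /literal; case: atom_val.
Qed.

Lemma flen_hintikkaS k s Y : size (hintikkas e x0 k (size s).+1) <= Y ->
  (forall t, size t = (size s).+1 -> flen (hintikka e x0 k t) <= Y) ->
  flen (hintikka e x0 k.+1 s) <= Y * (2 * Y + 8) + 16.
Proof.
move=> hsize hflen; rewrite hintikkaS.
set L := hintikka_exts _ _ _ _.
have hL : size L <= Y by rewrite /L size_filter; apply: leq_trans (count_size _ _) hsize.
have hf f : f \in L -> flen f <= Y.
  by case/mem_hintikka_exts => y <-; apply: hflen; rewrite size_rcons.
have h1 : flen (big_and [seq FEx (size s) f | f <- L]) <= size L * (Y + 2 + 3) + 5.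
  rewrite -(size_map (FEx (size s))).
  by apply: flen_big_and => _ /mapP [f /hf hf' ->] /=; lia.
have h2 := flen_big_or hf.
move: h1 h2 (leq_mul hL (leqnn (2 * Y + 8))); rewrite /=; move: (size L) => n; lia.
Qed.

Lemma hintikka_bounds k m : size (hintikkas e x0 k m) <= hintikka_bound k m /\
  forall s, size s = m -> flen (hintikka e x0 k s) <= hintikka_bound k m.
Proof.
elim: k m => [|k IH] m.
  rewrite /hintikka_bound /= addn0; split.
    by apply: leq_trans (size_hintikkas0 m) _; rewrite leq_pexp2l //; lia.
  move=> s <-; apply: leq_trans (flen_hintikka0 s) _.
  exact: leq_trans (affine_le_exp2 _).
have [IHsize IHflen] := IH m.+1; rewrite hintikka_boundS; split.
  by apply: leq_trans (size_hintikkasS k m) _; rewrite leq_pexp2l.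
move=> s hs; apply: leq_trans (quad_le_exp2 (hintikka_bound_ge16 k m.+1)).
by apply: flen_hintikkaS; rewrite hs.
Qed.

End HintikkaBounds.

Lemma tower_addn a b : tower (a + b) = iter a (fun x => 2 ^ x) (tower b).
Proof. by elim: a => //= a ->. Qed.

Lemma iter_exp2_mono a x y :
  x <= y -> iter a (fun x => 2 ^ x) x <= iter a (fun x => 2 ^ x) y.
Proof. by elim: a => //= a IH /IH; apply: leq_pexp2l. Qed.

Lemma leq_tower i : i <= tower i.
Proof. by elim: i => //= i IH; apply: leq_trans (ltn_expl _ _). Qed.

Lemma leq_tower_logstar d : d <= tower (logstar d).
Proof.
have has_d : has (fun i => d <= tower i) (iota 0 d.+1).
  by apply/hasP; exists d; rewrite ?mem_iota ?leq_tower //=; lia.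
have lt_find : logstar d < d.+1 by rewrite -[d.+1](size_iota 0) -has_find.
by have := nth_find 0 has_d; rewrite nth_iota.
Qed.

Lemma hintikka_bound_tower d : hintikka_bound d 0 <= tower (d + logstar d + 5).
Proof.
rewrite /hintikka_bound add0n -addnA tower_addn; apply: iter_exp2_mono.
rewrite [logstar d + 5]addnC tower_addn /= leq_pexp2l //.
set t := tower (logstar d); have hdt : d <= t := leq_tower_logstar d.
apply: leq_trans (_ : 2 * (t * t) + 4 <= _); first by rewrite leq_add2r leq_mul2l leq_mul.
apply: leq_trans (sq_le_exp2 t) _; rewrite leq_pexp2l //.
apply: leq_trans (double_le_exp2 t) _; rewrite leq_pexp2l //.
have h1 := ltn_expl (t + 1) (isT : 1 < 2).
have h2 : 2 ^ (t + 1) <= 2 ^ 2 ^ t by rewrite leq_pexp2l // addn1 ltn_expl.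
lia.
Qed.

Lemma defines_min (T : finType) (e : rel T) (cost : form -> nat) phi :
  defines e phi -> exists c,
    (exists psi, defines e psi /\ cost psi = c) /\
    (forall psi, defines e psi -> c <= cost psi).
Proof.
move=> def_phi; pose P c := exists psi, defines e psi /\ cost psi = c.
have [|c [[Pc min_c] _]] :=
  @dec_inh_nat_subset_has_unique_least_element P (fun c => classic (P c)).
  by exists (cost phi), phi.
by exists c; split=> // psi def_psi; apply/leP/min_c; exists psi.
Qed.

Theorem theorem10p1 :
  exists C : nat,
    forall (T : finType) (e : rel T),
      symmetric e -> irreflexive e -> 0 < #|T| ->
      exists d l : nat,
        is_D e d /\ is_L e l /\ l <= tower (d + logstar d + C).
Proof.
exists 5 => T e _ _ /card_gt0P [x0 _].
have def_card := defines_hintikka_card e x0.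
have [_ [[phi [def_phi <-]] min_d]] := defines_min qrank def_card.
have [l [def_l min_l]] := defines_min flen def_card.
exists (qrank phi), l; split; first by split; first exists phi.
split=> //; apply: leq_trans (min_l _ (defines_hintikka x0 def_phi (leqnn _))) _.
apply: leq_trans (hintikka_bound_tower _).
by have [_ ->] := hintikka_bounds e x0 (qrank phi) 0.
Qed.
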